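(* Let $G=C(n;\{1,2,\dots,k\})$, where $n\geq 4$ and $1\leq k<\lfloor n/2\rfloor$. Then $G$ is a hypo-unique domination graph if and only if $2k+1$ divides $n-1$. If $2k+1$ divides $n-1$, then $n=|V(G)|=(\Delta(G)+1)(\gamma(G)-1)+1$ and $G$ is a hypo-efficient domination graph.
   Context: All graphs are finite, simple and undirected. The circulant graph $C(n;\{1,\dots,k\})$ has vertex set $\{0,1,\dots,n-1\}$, with $i$ adjacent to $i\pm 1,\dots,i\pm k \pmod n$. For $v\in V(G)$, $N[v]$ is the closed neighborhood of $v$. A set $D\subseteq V(G)$ is dominating if every vertex of $G$ not in $D$ has a neighbor in $D$; $\gamma(G)$ is the minimum size of a dominating set, and a dominating set of size $\gamma(G)$ is a $\gamma$-set. A set $D\subseteq V(H)$ is an efficient dominating set (EDS) of $H$ if $|N_H[v]\cap D|=1$ for every $v\in V(H)$. $G$ is a hypo-efficient domination graph if $G$ has no EDS but $G-v$ has at least one EDS for every $v\in V(G)$. $G$ is a hypo-unique domination graph if $G$ has at least two $\gamma$-sets but $G-v$ has exactly one $\gamma$-set for every $v\in V(G)$. $\Delta(G)$ is the maximum degree. *)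

(* Graphs: a finite simple graph is a symmetric irreflexive
   relation [e : rel T] on a finType [T]; a (sub)graph is given by a vertex set
   [V : {set T}] together with the restriction of [e] to [V] (induced subgraph).
   Thus G - v is the induced subgraph on [V :\ v]. *)
From mathcomp Require Import all_boot.
Set Implicit Arguments. Unset Strict Implicit. Unset Printing Implicit Defensive.

Section Graphs.
Variables (T : finType) (e : rel T).

Definition cnbhd (V : {set T}) (v : T) : {set T} :=
  [set u in V | (u == v) || e v u].

Definition onbhd (V : {set T}) (v : T) : {set T} :=
  [set u in V | (u != v) && e v u].

Definition dominating (V D : {set T}) : bool :=
  (D \subset V) &&
  [forall v in V, (v \in D) || [exists u in D, e v u]].

(* domination number gamma (the family of dominating sets of V is nonempty:
   V itself dominates; #|T| is just an upper bound for the min) *)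
Definition gamma (V : {set T}) : nat :=
  \big[minn/#|T|]_(D : {set T} | dominating V D) #|D|.

Definition gamma_set (V D : {set T}) : bool :=
  dominating V D && (#|D| == gamma V).

Definition gamma_sets (V : {set T}) : {set {set T}} :=
  [set D | gamma_set V D].

Definition efficient_dominating (V D : {set T}) : bool :=
  (D \subset V) && [forall v in V, #|cnbhd V v :&: D| == 1].

Definition has_EDS (V : {set T}) : bool :=
  [exists D : {set T}, efficient_dominating V D].

Definition hypo_efficient (V : {set T}) : Prop :=
  ~~ has_EDS V /\ (forall v, v \in V -> has_EDS (V :\ v)).

Definition hypo_unique (V : {set T}) : Prop :=
  2 <= #|gamma_sets V| /\ (forall v, v \in V -> #|gamma_sets (V :\ v)| = 1).

Definition maxdeg (V : {set T}) : nat := \max_(v in V) #|onbhd V v|.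

End Graphs.

(* circulant graph C(n; {1,...,k}) on vertex set 'I_n:
   i ~ j iff (i - j) mod n lies in {1..k} or in {n-k..n-1} *)
Definition circ_adj (n k : nat) : rel 'I_n :=
  fun i j => let d := (i + n - j) %% n in (0 < d) && ((d <= k) || (n - k <= d)).
Arguments circ_adj : clear implicits.

(* Every closed neighbourhood of G = C(n; {1..k}) has p = 2k+1 vertices, so a dominating
   set D of a vertex set V has |V| <= p |D|, with equality only if every vertex of V is
   dominated exactly once and every neighbourhood of D lies inside V.
   If n - 1 = m p, the vertices v + k+1, v + k+1+p, ..., v + k+1+(m-1)p (mod n) form an
   efficient dominating set of G - v, and it is the only dominating set of size m: the
   vertex next to v forces the first element, and each element forces the next one.
   Adding v, or a neighbour of v, to it gives two minimum dominating sets of G, of size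
   m + 1; G has no EDS because p would divide both n and n - 1.
   If p does not divide n - 1, the same spaced set plus either of two vertices near the
   far end of G - v gives two minimum dominating sets of G - v. *)

From mathcomp Require Import all_boot all_order zify.
Set Implicit Arguments. Unset Strict Implicit. Unset Printing Implicit Defensive.

Section Domination.
Variables (T : finType) (e : rel T).
Implicit Types (V W D S A B : {set T}) (x u v : T).

Lemma cnbhdI V D x : D \subset V -> cnbhd e V x :&: D = cnbhd e D x.
Proof.
move=> sDV; apply/setP => u; rewrite !inE andbC.
by case uD: (u \in D); rewrite ?(subsetP sDV u uD).
Qed.

Lemma cnbhdS V W x : V \subset W -> cnbhd e V x \subset cnbhd e W x.
Proof. by move=> sVW; apply/subsetP => u; rewrite !inE => /andP [/(subsetP sVW) ->]. Qed.

Lemma cnbhd_setD1 V x v : cnbhd e (V :\ v) x = cnbhd e V x :\ v.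
Proof. by apply/setP => u; rewrite !inE andbA. Qed.

Lemma card_onbhd V v : #|onbhd e V v| = #|cnbhd e V v| - (v \in V).
Proof.
have -> : onbhd e V v = cnbhd e V v :\ v.
  by apply/setP => u; rewrite !inE; case: (u =P v) => [->|_]; rewrite ?andbF ?andbT.
by rewrite (cardsD1 v (cnbhd e V v)) [v \in cnbhd _ _ _]inE eqxx andbT addKn.
Qed.

Lemma maxdeg_regular V d (v0 : T) :
  v0 \in V -> {in V, forall v, #|onbhd e V v| = d} -> maxdeg e V = d.
Proof.
move=> v0V reg; apply/eqP; rewrite eqn_leq; apply/andP; split.
  by apply/bigmax_leqP => v /reg ->.
by rewrite -(reg v0 v0V); apply: leq_bigmax_cond.
Qed.

Lemma dominatingP V D :
  reflect (D \subset V /\ {in V, forall x, exists2 u, u \in D & (u == x) || e x u})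
          (dominating e V D).
Proof.
apply: (iffP andP) => [[sDV /forall_inP domD]|[sDV domD]].
  split => // x /domD; case/orP => [xD|/exists_inP [u uD xu]]; first by exists x; rewrite ?eqxx.
  by exists u; rewrite ?xu ?orbT.
split => //; apply/forall_inP => x /domD [u uD /orP [/eqP <-|xu]]; first by rewrite uD.
by apply/orP; right; apply/exists_inP; exists u.
Qed.

Lemma efficient_dominatingE V D : D \subset V ->
  efficient_dominating e V D = [forall x in V, #|cnbhd e D x| == 1].
Proof.
by move=> sDV; rewrite /efficient_dominating sDV; apply: eq_forallb_in => x _;
   rewrite cnbhdI.
Qed.

Lemma gamma_min V D : dominating e V D -> gamma e V <= #|D|.
Proof.
by move=> domD; rewrite /gamma -minEnat -leEnat; apply: Order.TotalTheory.bigmin_le_cond.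
Qed.

Lemma gamma_minimum V D0 : dominating e V D0 ->
  (forall D, dominating e V D -> #|D0| <= #|D|) -> gamma e V = #|D0|.
Proof.
move=> domD0 minD0; apply/eqP; rewrite eqn_leq gamma_min //= /gamma -minEnat -leEnat.
by apply/Order.TotalTheory.bigmin_geP; split; [exact: max_card | exact: minD0].
Qed.

Lemma card_gamma_sets1 V S : dominating e V S ->
  (forall D, dominating e V D -> #|S| <= #|D|) ->
  (forall D, dominating e V D -> #|D| = #|S| -> D = S) ->
  #|gamma_sets e V| = 1.
Proof.
move=> domS minS uniqS; suff -> : gamma_sets e V = [set S] by rewrite cards1.
apply/setP => D; rewrite !inE /gamma_set (gamma_minimum domS minS).
apply/andP/eqP => [[domD /eqP]|->]; first exact: uniqS.
by rewrite domS.
Qed.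

Lemma card_gamma_sets_ge2 V A B : dominating e V A -> dominating e V B ->
  #|A| = #|B| -> A != B -> (forall D, dominating e V D -> #|A| <= #|D|) ->
  2 <= #|gamma_sets e V|.
Proof.
move=> domA domB cAB nAB minA; have <- : #|[set A; B]| = 2 by rewrite cards2 nAB.
apply: subset_leq_card.
apply/subsetP => D; rewrite !inE /gamma_set (gamma_minimum domA minA).
by case/orP => /eqP ->; rewrite ?domA ?domB ?cAB eqxx.
Qed.

Hypothesis e_sym : symmetric e.

Lemma sum_card_cnbhd V D :
  \sum_(x in V) #|cnbhd e D x| = \sum_(u in D) #|cnbhd e V u|.
Proof.
have cardE W y : #|cnbhd e W y| = \sum_(u in W) ((u == y) || e y u).
  rewrite -sum1_card big_mkcond [RHS]big_mkcond /=; apply: eq_bigr => u _.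
  by rewrite inE; case: (u \in W); case: (_ || _).
under eq_bigr do rewrite cardE.
rewrite exchange_big; apply: eq_bigr => u _; rewrite cardE.
by apply: eq_bigr => x _; rewrite eq_sym e_sym.
Qed.

Lemma dominating_cnbhd_gt0 V D :
  dominating e V D -> {in V, forall x, 0 < #|cnbhd e D x|}.
Proof.
case/dominatingP => _ coverV x /coverV [u uD xu].
by apply/card_gt0P; exists u; rewrite inE uD.
Qed.

Lemma efficient_dominating_card V D p : efficient_dominating e V D ->
  {in D, forall u, #|cnbhd e V u| = p} -> #|V| = #|D| * p.
Proof.
move=> effD cardp; have /andP [sDV _] := effD.
move: effD; rewrite efficient_dominatingE // => /forall_inP once.
rewrite -sum_nat_const -(eq_bigr _ cardp) -sum_card_cnbhd -sum1_card.
by apply: eq_bigr => x /once /eqP.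
Qed.

Section CountingBound.
Variables (V D : {set T}) (p : nat).
Hypothesis cnbhd_le : {in D, forall u, #|cnbhd e V u| <= p}.
Hypothesis domD : dominating e V D.

Lemma dominating_card_lower : #|V| <= #|D| * p.
Proof.
have cover := dominating_cnbhd_gt0 domD.
rewrite -sum1_card -sum_nat_const (leq_trans (leq_sum _ cover)) //.
by rewrite sum_card_cnbhd leq_sum.
Qed.

Lemma dominating_card_tight : #|V| = #|D| * p ->
  {in V, forall x, #|cnbhd e D x| = 1} /\ {in D, forall u, #|cnbhd e V u| = p}.
Proof.
move=> cardV.
have L1 := leqif_sum (fun x (xV : x \in V) => leqif_eq (dominating_cnbhd_gt0 domD xV)).
have L2 := leqif_sum (fun u (uD : u \in D) => leqif_eq (cnbhd_le uD)).
rewrite sum_card_cnbhd in L1.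
have := (leqif_trans L1 L2).2; rewrite sum1_card sum_nat_const -cardV eqxx.
move/esym/andP => [/forall_inP tight1 /forall_inP tightp].
by split=> [x /tight1|u /tightp] /eqP.
Qed.

End CountingBound.

End Domination.

Lemma modn_cases a d : a < 3 * d ->
  [\/ a < d /\ a %% d = a, d <= a < 2 * d /\ a %% d = a - d
    | 2 * d <= a /\ a %% d = a - 2 * d].
Proof.
move=> a_lt; have d_gt0 : 0 < d by lia.
have := divn_eq a d; have := ltn_pmod a d_gt0.
have : a %/ d < 3 by rewrite ltn_divLR.
by case: (a %/ d) => [|[|[|q]]] // _; [constructor 1 | constructor 2 | constructor 3]; lia.
Qed.

Lemma modn_cases2 a d : a < 2 * d ->
  (a < d /\ a %% d = a) \/ (d <= a < 2 * d /\ a %% d = a - d).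
Proof. by move=> a_lt; have [] := @modn_cases a d; lia. Qed.

Lemma leq_succ_mul d j m : j < m -> j * d + d <= m * d.
Proof. by move=> j_lt; rewrite -mulSnr leq_mul2r j_lt orbT. Qed.

(* Rewrites each innermost [a %% d] to [a], [a - d] or [a - 2 * d] by case analysis on the
   range of [a], so that [lia] can finish. *)
Ltac case_modn :=
  repeat match goal with
  | |- context [?a %% ?d] =>
      lazymatch a with context [_ %% _] => fail | _ =>
        first [ have [[? ->]|[? ->]] := @modn_cases2 a d ltac:(lia)
              | have [[? ->]|[? ->]|[? ->]] := @modn_cases a d ltac:(lia) ] end
  end.

Section Circulant.
Variables n k : nat.
Hypothesis p_lt_n : k.*2.+1 < n.
Local Notation p := k.*2.+1.
Local Notation G := (circ_adj n k).
Implicit Types (v x y u : 'I_n) (V D : {set 'I_n}).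

Lemma n_gt0 : 0 < n. Proof. lia. Qed.

Definition offset v x : nat := (x + n - v) %% n.
Definition at_offset v (t : nat) : 'I_n :=
  Ordinal (ltn_pmod (v + t) (leq_ltn_trans (leq0n v) (ltn_ord v))).

(* [a] and [b] are at circular distance at most [k] in [Z/nZ]. *)
Definition circ_close (a b : nat) : bool :=
  [|| (a <= b + k) && (b <= a + k), a + n <= b + k | b + n <= a + k].

Lemma offset_lt v x : offset v x < n. Proof. exact: ltn_pmod n_gt0. Qed.

Lemma at_offsetK v t : t < n -> offset v (at_offset v t) = t.
Proof. rewrite /offset /= => t_lt; have ? := ltn_ord v; case_modn; lia. Qed.

Lemma offsetK v x : at_offset v (offset v x) = x.
Proof.
apply/val_inj; rewrite /offset /=; have ? := ltn_ord v; have ? := ltn_ord x.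
by case_modn; lia.
Qed.

Lemma offset_self v : offset v v = 0.
Proof. by rewrite /offset addKn modnn. Qed.

Lemma offset_eq0 v x : (offset v x == 0) = (x == v).
Proof.
by apply/eqP/eqP => [x0|->]; rewrite ?offset_self // -(offsetK v x) x0 -(offset_self v) offsetK.
Qed.

Lemma circ_adj_sym : symmetric G.
Proof.
move=> x y; rewrite /circ_adj; have ? := ltn_ord x; have ? := ltn_ord y.
by case_modn; lia.
Qed.

Lemma circ_closeE v x y : (y == x) || G x y = circ_close (offset v x) (offset v y).
Proof.
rewrite /circ_adj /circ_close /offset -(inj_eq val_inj) /=.
have ? := ltn_ord x; have ? := ltn_ord y; have ? := ltn_ord v; case_modn; lia.
Qed.

Lemma card_cnbhd_circ u : #|cnbhd G [set: 'I_n] u| = p.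
Proof.
(* [N[u]] is the arc of [p] vertices starting at [w = u - k]. *)
pose w := at_offset u (n - k).
have offset_w y : offset w y = (offset u y + k) %% n.
  by rewrite /offset /=; have ? := ltn_ord u; have ? := ltn_ord y; case_modn; lia.
have memE y : (y \in cnbhd G [set: 'I_n] u) = (offset w y < p).
  rewrite !inE /= (circ_closeE u) offset_self offset_w /circ_close.
  have := offset_lt u y; move: (offset u y) => t t_lt; case_modn; lia.
have -> : cnbhd G [set: 'I_n] u = [set at_offset w j | j : 'I_p].
  apply/setP => y; rewrite memE; apply/idP/imsetP => [near_y|[j _ ->]].
    by exists (Ordinal near_y); rewrite ?offsetK.
  by rewrite at_offsetK // (ltn_trans (ltn_ord j)).
rewrite card_imset ?card_ord // => i j /(congr1 (offset w)).
by rewrite !at_offsetK; [move/val_inj | have ? := ltn_ord j; lia | have ? := ltn_ord i; lia].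
Qed.

Lemma card_cnbhd_circ_le V u : #|cnbhd G V u| <= p.
Proof. by rewrite -(card_cnbhd_circ u) subset_leq_card // cnbhdS ?subsetT. Qed.

Lemma circ_dominating_card V D : dominating G V D -> #|V| <= #|D| * p.
Proof.
by move=> domD; apply: (dominating_card_lower circ_adj_sym _ domD) => u _;
   apply: card_cnbhd_circ_le.
Qed.

Lemma card_setT_D1 v : #|[set: 'I_n] :\ v| = n.-1.
Proof. by rewrite setTD cardsC1 card_ord. Qed.

Lemma offset_gt0 v x : (0 < offset v x) = (x \in [set: 'I_n] :\ v).
Proof. by rewrite lt0n offset_eq0 !inE andbT. Qed.

Lemma at_offset_setD1 v t : 0 < t < n -> at_offset v t \in [set: 'I_n] :\ v.
Proof. by case/andP=> t_gt0 t_lt; rewrite -offset_gt0 at_offsetK. Qed.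

Lemma maxdeg_circ : maxdeg G [set: 'I_n] = k.*2.
Proof.
apply: (@maxdeg_regular _ _ _ _ (Ordinal n_gt0)) => // v _.
by rewrite card_onbhd card_cnbhd_circ in_setT subn1.
Qed.

Lemma circ_no_EDS : 0 < k -> p %| n.-1 -> ~~ has_EDS G [set: 'I_n].
Proof.
move=> k_gt0 p_dvd; apply/existsP => -[D effD].
have := efficient_dominating_card circ_adj_sym effD (fun u _ => card_cnbhd_circ u).
rewrite cardsT card_ord => n_eq.
have /dvdn_sub/(_ p_dvd) : p %| n by rewrite n_eq dvdn_mull.
by rewrite (_ : n - n.-1 = 1) ?dvdn1; lia.
Qed.

Lemma dominating_card_gt V D m : dominating G V D -> m * p < #|V| -> m < #|D|.
Proof.
move=> domD lt_mp; rewrite -(ltn_pmul2r (ltn0Sn k.*2)).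
exact: leq_trans lt_mp (circ_dominating_card domD).
Qed.

Definition spaced v m := [set at_offset v (k.+1 + (j : 'I_m) * p) | j : 'I_m].

Lemma card_spaced_le v m : #|spaced v m| <= m.
Proof. by rewrite -{2}(card_ord m) leq_imset_card. Qed.

Section Spaced.
Variables (v : 'I_n) (m : nat).
Hypothesis mp_le : m * p <= n.-1.

Lemma offset_spaced j : j < m -> offset v (at_offset v (k.+1 + j * p)) = k.+1 + j * p.
Proof.
move=> j_lt; apply: at_offsetK.
by have := leq_succ_mul p j_lt; lia.
Qed.

Lemma spaced_sub : spaced v m \subset [set: 'I_n] :\ v.
Proof.
apply/subsetP => _ /imsetP [j _ ->].
by rewrite -offset_gt0 offset_spaced.
Qed.

Lemma spaced_cover x : 0 < offset v x <= m * p ->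
  exists2 u, u \in spaced v m & (u == x) || G x u.
Proof.
move=> x_range; set t := offset v x in x_range.
have t_eq := divn_eq t.-1 p; have t_mod : t.-1 %% p < p by rewrite ltn_pmod.
have j_lt : t.-1 %/ p < m by rewrite -(ltn_pmul2r (ltn0Sn k.*2)); lia.
exists (at_offset v (k.+1 + t.-1 %/ p * p)); first by apply/imsetP; exists (Ordinal j_lt).
rewrite (circ_closeE v) offset_spaced // -/t /circ_close.
by have := leq_succ_mul p j_lt; lia.
Qed.

Lemma spaced_extend_dominating V y : spaced v m \subset V -> y \in V ->
  {in V, forall x, ~~ (0 < offset v x <= m * p) -> (y == x) || G x y} ->
  dominating G V (y |: spaced v m).
Proof.
move=> sub yV far_y; apply/dominatingP; split; first by rewrite subUset sub1set yV.
move=> x xV; case: (boolP (0 < offset v x <= m * p)) => [x_range|x_out].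
  by have [u uS xu] := spaced_cover x_range; exists u; rewrite ?setU1r.
by exists y; rewrite ?setU11 ?far_y.
Qed.

End Spaced.

Section Extension.
Variables (V : {set 'I_n}) (v : 'I_n) (m : nat).
Hypothesis mp_lt : m * p < #|V|.

Lemma card_spaced_extend y : dominating G V (y |: spaced v m) ->
  #|y |: spaced v m| = m.+1 /\ y \notin spaced v m.
Proof.
move=> domS; have := dominating_card_gt domS mp_lt.
rewrite cardsU1; have := card_spaced_le v m.
by case: (y \notin spaced v m); lia.
Qed.

Lemma gamma_spaced_extend y : dominating G V (y |: spaced v m) -> gamma G V = m.+1.
Proof.
move=> domS; have [cardS _] := card_spaced_extend domS.
by rewrite -cardS; apply: gamma_minimum => // D /dominating_card_gt; rewrite cardS; apply.
Qed.

Lemma two_gamma_sets_spaced y y' : y != y' ->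
  dominating G V (y |: spaced v m) -> dominating G V (y' |: spaced v m) ->
  2 <= #|gamma_sets G V|.
Proof.
move=> yy' domS domS'.
have [cardS yS] := card_spaced_extend domS; have [cardS' _] := card_spaced_extend domS'.
apply: (card_gamma_sets_ge2 domS domS'); first by rewrite cardS cardS'.
  apply: contra_neq yy' => eqS; have := setU11 y (spaced v m).
  by rewrite eqS !inE (negbTE yS) orbF => /eqP.
by move=> D /dominating_card_gt; rewrite cardS; apply.
Qed.

End Extension.

Section PerfectCode.
Variables (v : 'I_n) (m : nat).
Hypothesis mp : m * p = n.-1.
Local Notation V' := ([set: 'I_n] :\ v).

Let mp_le : m * p <= n.-1. Proof. by rewrite mp. Qed.

Lemma spaced_dominating : dominating G V' (spaced v m).
Proof.
apply/dominatingP; split; first exact: spaced_sub.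
move=> x xV; apply: spaced_cover => //.
by rewrite offset_gt0 xV mp /=; have := offset_lt v x; lia.
Qed.

Lemma card_spaced : #|spaced v m| = m.
Proof.
apply/eqP; rewrite eqn_leq card_spaced_le /=.
have := circ_dominating_card spaced_dominating.
by rewrite card_setT_D1 -mp leq_mul2r.
Qed.

Lemma dominating_perfect D : dominating G V' D -> #|D| = m ->
  {in V', forall x, #|cnbhd G D x| = 1} /\ {in D, forall u, #|cnbhd G V' u| = p}.
Proof.
move=> domD cardD; apply: (dominating_card_tight circ_adj_sym _ domD).
  by move=> u _; apply: card_cnbhd_circ_le.
by rewrite card_setT_D1 cardD mp.
Qed.

Lemma spaced_efficient : efficient_dominating G V' (spaced v m).
Proof.
rewrite efficient_dominatingE ?spaced_sub //; apply/forall_inP => x xV.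
by have [-> //] := dominating_perfect spaced_dominating card_spaced.
Qed.

Section Uniqueness.
Variable D : {set 'I_n}.
Hypotheses (domD : dominating G V' D) (cardD : #|D| = m).

Lemma perfect_far u : u \in D -> k < offset v u /\ offset v u + k < n.
Proof.
move=> uD; have [_ /(_ u uD)] := dominating_perfect domD cardD.
rewrite cnbhd_setD1 => cardV'.
have := cardsD1 v (cnbhd G [set: 'I_n] u); rewrite card_cnbhd_circ cardV'.
rewrite !inE (circ_closeE v) offset_self /circ_close.
by have := offset_lt v u; lia.
Qed.

Lemma perfect_once x u u' : x \in V' -> u \in D -> u' \in D ->
  (u == x) || G x u -> (u' == x) || G x u' -> u = u'.
Proof.
move=> xV uD u'D xu xu'; have [/(_ x xV) once _] := dominating_perfect domD cardD.
have /card_le1_eqP : #|cnbhd G D x| <= 1 by rewrite once.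
by apply; rewrite inE ?uD ?u'D.
Qed.

Lemma perfect_dominated t : 0 < t < n ->
  exists2 u, u \in D & circ_close t (offset v u).
Proof.
move=> t_range; have /dominatingP [_ /(_ _ (at_offset_setD1 v t_range))] := domD.
by case=> u uD; rewrite (circ_closeE v) at_offsetK; [exists u | case/andP: t_range].
Qed.

Lemma perfect_first : at_offset v k.+1 \in D.
Proof.
have [|u uD close_u] := @perfect_dominated 1; first lia.
have [far_l far_r] := perfect_far uD.
have -> : k.+1 = offset v u by move: close_u; rewrite /circ_close; lia.
by rewrite offsetK.
Qed.

Lemma perfect_next u :
  u \in D -> offset v u + k.+1 < n -> at_offset v (offset v u + p) \in D.
Proof.
move=> uD; set a := offset v u => a_lt; have [far_l far_r] := perfect_far uD.
have [|u' u'D close_u'] := @perfect_dominated (a + k.+1); first lia.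
have [far_l' far_r'] := perfect_far u'D.
suff <- : offset v u' = a + p by rewrite offsetK.
(* Otherwise [u'] would also dominate the vertex [v + a + k], already dominated by [u]. *)
case: (eqVneq (offset v u') (a + p)) => // ne; exfalso.
have z_in : at_offset v (a + k) \in V' by apply: at_offset_setD1; lia.
have z_lt : a + k < n by lia.
move: close_u'; rewrite /circ_close => close_u'.
have uu' : u = u'.
  apply: (perfect_once z_in uD u'D);
  by rewrite (circ_closeE v) at_offsetK // /circ_close -/a; lia.
by move: close_u'; rewrite -uu' -/a; lia.
Qed.

Lemma spaced_sub_perfect : spaced v m \subset D.
Proof.
apply/subsetP => _ /imsetP [j _ ->]; move: (ltn_ord j).
elim: (nat_of_ord j) => [_|i IH i_lt]; first by rewrite mul0n addn0 perfect_first.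
have := perfect_next (IH (ltnW i_lt)).
rewrite (offset_spaced v mp_le) ?(ltnW i_lt) // mulSnr addnA.
by apply; have := leq_succ_mul p i_lt; rewrite mulSnr; lia.
Qed.

Lemma perfect_unique : D = spaced v m.
Proof. by apply/eqP; rewrite eq_sym eqEcard spaced_sub_perfect card_spaced cardD leqnn. Qed.

End Uniqueness.

End PerfectCode.

Lemma divisible_gamma_sets m : 0 < k -> m * p = n.-1 ->
  gamma G [set: 'I_n] = m.+1 /\ 2 <= #|gamma_sets G [set: 'I_n]|.
Proof.
move=> k_gt0 mp; pose v := Ordinal n_gt0; pose y := at_offset v 1.
have mp_lt : m * p < #|[set: 'I_n]| by rewrite cardsT card_ord mp; lia.
have domS u : (u == v) || G v u -> dominating G [set: 'I_n] (u |: spaced v m).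
  have mp_le : m * p <= n.-1 by rewrite mp.
  move=> vu; apply: (spaced_extend_dominating mp_le (subsetT _) (in_setT u)).
  move=> x _ x_out; suff /eqP -> : x == v by [].
  by rewrite -offset_eq0; have := offset_lt v x; move: x_out mp; lia.
have yv : (y == v) || G v y.
  by rewrite (circ_closeE v) offset_self at_offsetK /circ_close; lia.
have vv : (v == v) || G v v by rewrite eqxx.
split; first exact: gamma_spaced_extend (domS v vv).
apply: (two_gamma_sets_spaced mp_lt _ (domS v vv) (domS y yv)).
by rewrite eq_sym -offset_eq0 at_offsetK //; lia.
Qed.

Lemma deleted_gamma_sets_unique m v : m * p = n.-1 ->
  #|gamma_sets G ([set: 'I_n] :\ v)| = 1.
Proof.
move=> mp; apply: card_gamma_sets1 (spaced_dominating v mp) _ _ => [D domD|D domD cardD].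
  rewrite (card_spaced v mp) -(leq_pmul2r (ltn0Sn k.*2)) mp -(card_setT_D1 v).
  exact: circ_dominating_card.
by apply: (perfect_unique mp domD); rewrite cardD card_spaced.
Qed.

Lemma nondivisible_gamma_sets v : ~~ (p %| n.-1) ->
  2 <= #|gamma_sets G ([set: 'I_n] :\ v)|.
Proof.
rewrite /dvdn -lt0n => r_gt0; set m := n.-1 %/ p.
have n_eq := divn_eq n.-1 p; have r_lt : n.-1 %% p < p by rewrite ltn_pmod.
have mp_le : m * p <= n.-1 by lia.
have mp_lt : m * p < #|[set: 'I_n] :\ v| by rewrite card_setT_D1; lia.
(* The [n.-1 %% p <= 2k] vertices after offset [m * p] are within distance [k] of both
   [v - k - 1] and [v - k]. *)
have domS t : n.-1 - k <= t <= n - k ->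
    dominating G ([set: 'I_n] :\ v) (at_offset v t |: spaced v m).
  move=> t_range; apply: (spaced_extend_dominating mp_le); first exact: spaced_sub.
    by apply: at_offset_setD1; lia.
  move=> x; rewrite -offset_gt0 => x_gt0 x_out; rewrite (circ_closeE v) at_offsetK; last lia.
  by have := offset_lt v x; move: x_gt0 x_out; rewrite /circ_close; lia.
apply: (two_gamma_sets_spaced mp_lt _ (domS (n.-1 - k) _) (domS (n - k) _)); [|lia|lia].
by apply/eqP => /(congr1 (offset v)); rewrite !at_offsetK; lia.
Qed.

End Circulant.

Theorem proposition3p19 (n k : nat) :
  4 <= n -> 1 <= k -> k < n./2 ->
  (hypo_unique (circ_adj n k) [set: 'I_n] <-> (k.*2.+1 %| n.-1)) /\
  ((k.*2.+1 %| n.-1) ->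
     n = (maxdeg (circ_adj n k) [set: 'I_n]).+1 *
           (gamma (circ_adj n k) [set: 'I_n]).-1 + 1 /\
     hypo_efficient (circ_adj n k) [set: 'I_n]).
Proof.
move=> _ k_gt0 k_lt; have p_lt_n : k.*2.+1 < n by lia.
split; first split.
- case=> _ unique1; apply/negPn/negP => ndvd.
  have := nondivisible_gamma_sets p_lt_n (Ordinal (n_gt0 p_lt_n)) ndvd.
  by rewrite unique1 ?in_setT.
- move=> /divnK mp; split; first by have [_ ->] := divisible_gamma_sets p_lt_n k_gt0 mp.
  by move=> v _; exact: (deleted_gamma_sets_unique p_lt_n v mp).
- move=> dvd; have mp := divnK dvd.
  have [-> _] := divisible_gamma_sets p_lt_n k_gt0 mp.
  rewrite (maxdeg_circ p_lt_n) /=; split; first by rewrite mulnC mp; lia.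
  split; first exact: (circ_no_EDS p_lt_n k_gt0 dvd).
  by move=> v _; apply/existsP; exists (spaced k v (n.-1 %/ k.*2.+1));
     exact: (spaced_efficient p_lt_n v mp).
Qed.
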